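(* For every BIMS channel with capacity $C$ and every $\rho>-1$, $$-\log F^{\rm bsc}(\rho;C)\le E_0(\rho)\le -\log F^{\rm bec}(\rho;C).$$ In particular, the cutoff rate $R_0=E_0(1)$ satisfies $$-\log\Bigl(\tfrac12\bigl(\sqrt{\varepsilon}+\sqrt{1-\varepsilon}\bigr)^2\Bigr)\le R_0\le -\log\frac{1+(1-C)}{2},\qquad \varepsilon=h^{-1}(1-C),$$ with equality on the left for the BSC and on the right for the BEC.
   Context: A BIMS (binary-input memoryless symmetric) channel is a memoryless channel with input alphabet $\{x_0,x_1\}$, finite output alphabet $\mathcal Y$ and transition probabilities $P_{Y|X}(y|x)$. It is symmetric in Gallager's sense: the columns of the $2\times|\mathcal Y|$ transition matrix (rows indexed by inputs) can be partitioned into submatrices such that, in each submatrix, every row is a permutation of every other row and every column is a permutation of every other column. Inputs are equiprobable and logarithms are base 2. The capacity $C$ is $I(X;Y)$ under equiprobable inputs. For $\rho>-1$, $$F(\rho)=\sum_{x}\tfrac12\sum_{y:\,P_{Y|X}(y|x)>0}P_{Y|X}(y|x)\left(\frac{\tfrac12\sum_{x'}P_{Y|X}(y|x')^{1/(1+\rho)}}{P_{Y|X}(y|x)^{1/(1+\rho)}}\right)^{\rho},$$ and $E_0(\rho)=-\log F(\rho)$. $h$ is the binary entropy function and $h^{-1}$ its inverse on $[0,\tfrac12]$. Define $$F^{\rm bec}(\rho;C)=1+(2^{-\rho}-1)C,$$ $$F^{\rm bsc}(\rho;C)=2^{-\rho}\bigl(\varepsilon^{1/(1+\rho)}+(1-\varepsilon)^{1/(1+\rho)}\bigr)^{1+\rho},\qquad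 \varepsilon=h^{-1}(1-C).$$ *)

From Stdlib Require Import Reals Lra List Permutation.
Import ListNotations.
Open Scope R_scope.

Definition log2 (x : R) : R := ln x / ln 2.

(** real power with the convention 0^b = 0 (used only for b > 0 or base > 0) *)
Definition rpow (a b : R) : R := if Rlt_dec 0 a then Rpower a b else 0.

Definition sumR (m : nat) (f : nat -> R) : R :=
  fold_right Rplus 0 (map f (seq 0 m)).

(** A channel with inputs x0 = false, x1 = true and output alphabet
    {0,...,m-1}; W x y = P_{Y|X}(y|x). *)
Definition is_channel (m : nat) (W : bool -> nat -> R) : Prop :=
  (forall x y, 0 <= W x y) /\ (forall x, sumR m (W x) = 1).

(** Gallager symmetry for a 2 x m transition matrix: the columns can be
    partitioned (class label cls) such that in each submatrix the two rows
    are permutations of each other and every column is a permutation of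
    every other column. *)
Definition gallager_symmetric (m : nat) (W : bool -> nat -> R) : Prop :=
  exists cls : nat -> nat,
    (forall c : nat,
       Permutation
         (map (W false) (filter (fun y => Nat.eqb (cls y) c) (seq 0 m)))
         (map (W true)  (filter (fun y => Nat.eqb (cls y) c) (seq 0 m)))) /\
    (forall y y', (y < m)%nat -> (y' < m)%nat -> cls y = cls y' ->
       (W false y = W false y' /\ W true y = W true y') \/
       (W false y = W true y' /\ W true y = W false y')).

Definition is_BIMS (m : nat) (W : bool -> nat -> R) : Prop :=
  is_channel m W /\ gallager_symmetric m W.

(** capacity = I(X;Y) under equiprobable inputs *)
Definition capacity (m : nat) (W : bool -> nat -> R) : R :=
  sumR 2 (fun i => let x := Nat.eqb i 1 in
    / 2 * sumR m (fun y =>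
      if Rlt_dec 0 (W x y)
      then W x y * log2 (W x y / (/ 2 * (W false y + W true y)))
      else 0)).

Definition Fg (m : nat) (W : bool -> nat -> R) (rho : R) : R :=
  sumR 2 (fun i => let x := Nat.eqb i 1 in
    / 2 * sumR m (fun y =>
      if Rlt_dec 0 (W x y)
      then W x y *
           Rpower ((/ 2 * (rpow (W false y) (/ (1 + rho))
                           + rpow (W true y) (/ (1 + rho))))
                   / rpow (W x y) (/ (1 + rho))) rho
      else 0)).

Definition E0 (m : nat) (W : bool -> nat -> R) (rho : R) : R :=
  - log2 (Fg m W rho).

(** binary entropy, with 0 log 0 = 0 *)
Definition plogp (p : R) : R := if Rlt_dec 0 p then p * log2 p else 0.
Definition hb (p : R) : R := - plogp p - plogp (1 - p).

Definition Fbec (rho C : R) : R := 1 + (Rpower 2 (- rho) - 1) * C.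

(** F^bsc(rho;C), with eps standing for h^{-1}(1-C) *)
Definition Fbsc (rho eps : R) : R :=
  Rpower 2 (- rho) *
  Rpower (rpow eps (/ (1 + rho)) + rpow (1 - eps) (/ (1 + rho))) (1 + rho).

Definition bsc (p : R) (x : bool) (y : nat) : R :=
  match y with
  | 0%nat => if x then p else 1 - p
  | 1%nat => if x then 1 - p else p
  | _ => 0
  end.

(** BEC with erasure probability e (outputs 0,1, erasure = 2) *)
Definition bec (e : R) (x : bool) (y : nat) : R :=
  match y with
  | 0%nat => if x then 0 else 1 - e
  | 1%nat => if x then 1 - e else 0
  | 2%nat => e
  | _ => 0
  end.

(** Write [q_y = (W(y|0) + W(y|1))/2] and [p_y = W(y|0) / (W(y|0) + W(y|1))].
    With equiprobable inputs every binary-input channel is the mixture of the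
    BSCs with crossovers [p_y], used with probabilities [q_y]:
      F(rho) = sum_y q_y F^bsc(rho; p_y),    C = sum_y q_y (1 - h(p_y)).
    The heart of the proof is that F^bsc(rho; p), viewed as a function of the
    entropy h(p), is concave.  We prove this in the coordinate
    s = ln((1-p)/p)/2: the derivative [slope] of F^bsc with respect to the
    entropy is nondecreasing in s, while the entropy decreases, which yields
    a supporting line at every interior point ([bsc_supporting_line]) and,
    from it, the chord inequality ([bsc_above_chord]).  Averaging the chord
    over the mixture gives F >= F^bec (Jensen), averaging the supporting line
    at eps = h^-1(1 - C) gives F <= F^bsc; -log2 reverses both. *)

From Stdlib Require Import Reals Lra Psatz List.
From Coquelicot Require Import Coquelicot.
Open Scope R_scope.

Lemma nondecreasing_of_deriv (f f' : R -> R) (x y : R) : x <= y ->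
  (forall c, x <= c <= y -> is_derive f c (f' c)) ->
  (forall c, x < c < y -> 0 <= f' c) -> f x <= f y.
Proof.
  intros Hxy Hd Hpos. destruct (Req_dec x y) as [->|Hne]; [lra|].
  destruct (MVT_cor2 f f' x y) as [c [Hc Hin]];
    [lra | intros c Hc; apply is_derive_Reals; auto |].
  specialize (Hpos c Hin). nra.
Qed.

Lemma increasing_of_deriv (f f' : R -> R) (x y : R) : x < y ->
  (forall c, x <= c <= y -> is_derive f c (f' c)) ->
  (forall c, x < c < y -> 0 < f' c) -> f x < f y.
Proof.
  intros Hxy Hd Hpos.
  destruct (MVT_cor2 f f' x y) as [c [Hc Hin]];
    [lra | intros c Hc; apply is_derive_Reals; auto |].
  specialize (Hpos c Hin). nra.
Qed.

Lemma nonincreasing_of_deriv (f f' : R -> R) (x y : R) : x <= y ->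
  (forall c, x <= c <= y -> is_derive f c (f' c)) ->
  (forall c, x < c < y -> f' c <= 0) -> f y <= f x.
Proof.
  intros Hxy Hd Hneg.
  enough (- f x <= - f y) by lra.
  apply (nondecreasing_of_deriv (fun t => - f t) (fun t => - f' t)); auto.
  - intros c Hc. apply (is_derive_opp f), Hd, Hc.
  - intros c Hc. specialize (Hneg c Hc). lra.
Qed.

Lemma exp_monotone x y : x <= y -> exp x <= exp y.
Proof. intros [H| ->]; [left; apply exp_increasing; exact H | lra]. Qed.

Lemma one_plus_exp_pos x : 0 < 1 + exp x.
Proof. pose proof (exp_pos x); lra. Qed.

(** Two elementary inequalities: [sinh y >= y] and [tanh (x/2) <= x/2]. *)
Lemma sinh_ge y : 0 <= y -> 2 * y <= exp y - exp (- y).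
Proof.
  intro Hy. pose (g := fun y => exp y - exp (- y) - 2 * y).
  enough (g 0 <= g y) by (unfold g in *; rewrite Ropp_0, exp_0 in *; lra).
  apply (nondecreasing_of_deriv g (fun y => exp y + exp (- y) - 2)); auto; unfold g.
  - intros c _. auto_derive; auto. ring.
  - intros c _. pose proof (exp_ineq1_le c). pose proof (exp_ineq1_le (- c)). lra.
Qed.

Lemma tanh_half_le x : 0 <= x -> 2 * (1 - exp (- x)) <= x * (1 + exp (- x)).
Proof.
  intro Hx. pose (g := fun x => x * (1 + exp (- x)) - 2 * (1 - exp (- x))).
  enough (g 0 <= g x) by (unfold g in *; rewrite Ropp_0, exp_0 in *; lra).
  apply (nondecreasing_of_deriv g (fun x => exp (- x) * (exp x - 1 - x))); auto; unfold g.
  - intros c _. auto_derive; auto. rewrite exp_Ropp. field. apply Rgt_not_eq, exp_pos.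
  - intros c _. pose proof (exp_ineq1_le c). pose proof (exp_pos (- c)). nra.
Qed.

(** The BSC with crossover [p = 1 / (1 + e^(2s))] written in the coordinate
    [s] (half the log-likelihood ratio); [alpha r = 1/(1+r)] is the exponent
    in Gallager's function. [ent s] is its entropy in nats, [fbs r s] its
    value of F^bsc. *)
Definition alpha (r : R) : R := / (1 + r).

Definition ent (s : R) : R :=
  ln (1 + exp (2 * s)) - 2 * s * exp (2 * s) / (1 + exp (2 * s)).

Definition fbs (r s : R) : R :=
  exp (- r * ln 2 + (1 + r) * ln (1 + exp (2 * alpha r * s)) - ln (1 + exp (2 * s))).

(** [slope r s] is [d fbs / d ent] at [s]; it factors through [gfac],
    which is [2^-r (1 + e^(2 alpha s))^r]. *)
Definition gfac (r s : R) : R := exp (- r * ln 2 + r * ln (1 + exp (2 * alpha r * s))).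

Definition slope (r s : R) : R :=
  gfac r s * (1 - exp (-2 * (1 - alpha r) * s)) / (2 * s).

Definition d_ent (s : R) : R := - 4 * s * exp (2 * s) / (1 + exp (2 * s)) ^ 2.

Definition d_fbs (r s : R) : R :=
  fbs r s * (2 * exp (2 * alpha r * s) / (1 + exp (2 * alpha r * s))
             - 2 * exp (2 * s) / (1 + exp (2 * s))).

Lemma alpha_pos r : -1 < r -> 0 < alpha r.
Proof. intro. apply Rinv_0_lt_compat. lra. Qed.

Ltac side_conds := repeat match goal with
  | |- _ /\ _ => split
  | |- True => exact I
  | |- 0 < 1 + exp _ => apply one_plus_exp_pos
  | |- 1 + exp _ <> 0 => apply Rgt_not_eq, one_plus_exp_pos
  end.

Lemma ent_deriv s : is_derive ent s (d_ent s).
Proof.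
  unfold ent, d_ent. auto_derive; side_conds.
  pose proof (one_plus_exp_pos (2 * s)). field. lra.
Qed.

Lemma fbs_deriv r s : -1 < r -> is_derive (fbs r) s (d_fbs r s).
Proof.
  intro Hr. unfold d_fbs, fbs. auto_derive; side_conds.
  unfold Rminus.
  pose proof (one_plus_exp_pos (2 * s)). pose proof (one_plus_exp_pos (2 * alpha r * s)).
  set (E := exp (- r * ln 2 + _ + _)).
  set (A := exp (2 * alpha r * s)) in *. set (B := exp (2 * s)) in *.
  unfold alpha. field. lra.
Qed.

Lemma d_ent_neg s : 0 < s -> d_ent s < 0.
Proof.
  intro Hs. unfold d_ent. pose proof (exp_pos (2 * s)). pose proof (one_plus_exp_pos (2 * s)).
  assert (0 < 4 * s * exp (2 * s) / (1 + exp (2 * s)) ^ 2)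
    by (apply Rdiv_lt_0_compat; [nra | apply pow_lt; lra]).
  unfold Rdiv in *. lra.
Qed.

Lemma ent_decreasing s1 s2 : 0 <= s1 < s2 -> ent s2 < ent s1.
Proof.
  intro H. enough (- ent s1 < - ent s2) by lra.
  apply (increasing_of_deriv (fun t => - ent t) (fun t => - d_ent t)); [lra| |].
  - intros c _. apply (is_derive_opp ent), ent_deriv.
  - intros c Hc. pose proof (d_ent_neg c ltac:(lra)). lra.
Qed.

Lemma d_fbs_slope r s : -1 < r -> s <> 0 -> d_fbs r s = d_ent s * slope r s.
Proof.
  intros Hr Hs. unfold d_fbs, d_ent, slope, fbs, gfac.
  replace (- r * ln 2 + (1 + r) * ln (1 + exp (2 * alpha r * s)) - ln (1 + exp (2 * s)))
    with ((- r * ln 2 + r * ln (1 + exp (2 * alpha r * s)))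
          + (ln (1 + exp (2 * alpha r * s)) - ln (1 + exp (2 * s)))) by ring.
  rewrite exp_plus, <- ln_div, exp_ln by
    (try apply Rdiv_lt_0_compat; apply one_plus_exp_pos).
  replace (exp (2 * alpha r * s)) with (exp (2 * s) * exp (-2 * (1 - alpha r) * s))
    by (rewrite <- exp_plus; f_equal; ring).
  pose proof (one_plus_exp_pos (2 * s)). pose proof (exp_pos (2 * s)).
  pose proof (exp_pos (-2 * (1 - alpha r) * s)).
  field. repeat split; nra.
Qed.

(** Numerator of the derivative of [slope]; its sign gives the monotonicity
    of [slope], i.e. the concavity of F^bsc in the entropy. *)
Definition slope_num (r s : R) : R :=
  let x := 2 * (1 - alpha r) * s in
  let z := exp (- x) in
  let A := exp (2 * alpha r * s) in
  x * (A / (1 + A)) * (1 - z) + x * z - (1 - z).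

Lemma slope_deriv r s : -1 < r -> s <> 0 ->
  is_derive (slope r) s (gfac r s / (2 * s ^ 2) * slope_num r s).
Proof.
  intros Hr Hs. unfold slope, slope_num, gfac. auto_derive.
  - side_conds; lra.
  - pose proof (one_plus_exp_pos (2 * alpha r * s)).
    replace (- (2 * (1 - alpha r) * s)) with (-2 * (1 - alpha r) * s) by ring.
    set (E := exp (_ + _)). set (A := exp (2 * alpha r * s)) in *.
    set (z := exp (-2 * (1 - alpha r) * s)).
    unfold alpha in *. field. lra.
Qed.

(** [slope_num >= 0] for [s > 0]: for [r < 0] (so [x < 0]) it reduces to
    [sinh_ge], for [r > 0] (so [x > 0]) to [tanh_half_le]. *)
Lemma slope_num_nonneg r s : -1 < r -> 0 < s -> 0 <= slope_num r s.
Proof.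
  intros Hr Hs. unfold slope_num. cbv zeta.
  pose proof (alpha_pos r Hr) as Ha.
  set (b := 1 - alpha r).
  set (A := exp (2 * alpha r * s)). set (x := 2 * b * s). set (z := exp (- x)).
  assert (HA : 0 < A) by apply exp_pos. assert (Hz : 0 < z) by apply exp_pos.
  destruct (Rtotal_order b 0) as [Hb|[Hb|Hb]].
  - assert (Hx : x < 0) by (unfold x; nra).
    assert (HzA : z <= A) by (apply exp_monotone; unfold x, b in *; nra).
    assert (Hz1 : 1 < z) by (rewrite <- exp_0; apply exp_increasing; lra).
    assert (Hfrac : z / (1 + z) <= A / (1 + A)).
    { apply (Rmult_le_reg_r ((1 + z) * (1 + A))); [nra|]. field_simplify; nra. }
    pose proof (sinh_ge (- x) ltac:(lra)) as Hsinh. fold z in Hsinh.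
    rewrite Ropp_involutive in Hsinh.
    replace (exp x) with (/ z) in Hsinh by (unfold z; rewrite exp_Ropp, Rinv_inv; auto).
    assert (Hk : 2 * (- x) * z <= z * z - 1).
    { apply (Rmult_le_compat_l z) in Hsinh; [|lra].
      rewrite Rmult_minus_distr_l, Rinv_r in Hsinh; lra. }
    assert (x * (z / (1 + z)) * (1 - z) + x * z - (1 - z)
            = (2 * x * z + z * z - 1) / (1 + z)) by (field; lra).
    assert (0 <= (2 * x * z + z * z - 1) / (1 + z)) by (apply Rdiv_le_0_compat; lra).
    assert (x * (z / (1 + z)) * (1 - z) <= x * (A / (1 + A)) * (1 - z)).
    { assert (0 < x * (1 - z)) by nra.
      replace (x * (z / (1 + z)) * (1 - z)) with (z / (1 + z) * (x * (1 - z))) by ring.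
      replace (x * (A / (1 + A)) * (1 - z)) with (A / (1 + A) * (x * (1 - z))) by ring.
      apply Rmult_le_compat_r; lra. }
    lra.
  - assert (x = 0) by (unfold x; rewrite Hb; ring).
    unfold z. rewrite H, Ropp_0, exp_0. lra.
  - assert (Hx : 0 < x) by (unfold x; nra).
    assert (HA1 : 1 <= A) by (rewrite <- exp_0; apply exp_monotone; nra).
    assert (Hz1 : z < 1) by (rewrite <- exp_0; apply exp_increasing; lra).
    assert (Hfrac : / 2 <= A / (1 + A)).
    { apply (Rmult_le_reg_r (2 * (1 + A))); [nra|]. field_simplify; nra. }
    pose proof (tanh_half_le x ltac:(lra)) as Htanh. fold z in Htanh.
    assert (x * / 2 * (1 - z) <= x * (A / (1 + A)) * (1 - z)).
    { apply Rmult_le_compat_r; [lra|]. apply Rmult_le_compat_l; lra. }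
    lra.
Qed.

Lemma slope_nondecreasing r s1 s2 : -1 < r -> 0 < s1 -> s1 <= s2 -> slope r s1 <= slope r s2.
Proof.
  intros Hr H1 H2.
  apply (nondecreasing_of_deriv (slope r) (fun s => gfac r s / (2 * s ^ 2) * slope_num r s)); auto.
  - intros c Hc. apply slope_deriv; auto. lra.
  - intros c Hc. apply Rmult_le_pos; [|apply slope_num_nonneg; lra].
    apply Rdiv_le_0_compat; [left; apply exp_pos | nra].
Qed.

(** Concavity of [fbs] as a function of [ent], as a supporting-line
    inequality: [fbs - slope(s0) * ent] is maximal at [s0]. *)
Lemma supporting_line_s r s0 s : -1 < r -> 0 < s0 -> 0 <= s ->
  fbs r s - slope r s0 * ent s <= fbs r s0 - slope r s0 * ent s0.
Proof.
  intros Hr H0 Hs. set (D0 := slope r s0).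
  assert (Hder : forall c, is_derive (fun t => fbs r t - D0 * ent t) c (d_fbs r c - D0 * d_ent c)).
  { intro c. apply (is_derive_minus (fbs r) (fun t => D0 * ent t)).
    - apply fbs_deriv; auto.
    - apply (is_derive_scal ent), ent_deriv. }
  assert (Hsign : forall c, 0 < c -> d_fbs r c - D0 * d_ent c = d_ent c * (slope r c - D0)).
  { intros c Hc. rewrite d_fbs_slope by lra. ring. }
  destruct (Rle_or_lt s s0) as [Hle|Hlt].
  - apply (nondecreasing_of_deriv _ _ s s0 Hle (fun c _ => Hder c)).
    intros c Hc. rewrite Hsign by lra.
    pose proof (d_ent_neg c ltac:(lra)). pose proof (slope_nondecreasing r c s0 Hr ltac:(lra) ltac:(lra)).
    fold D0 in H1. nra.
  - apply (nonincreasing_of_deriv _ _ s0 s ltac:(lra) (fun c _ => Hder c)).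
    intros c Hc. rewrite Hsign by lra.
    pose proof (d_ent_neg c ltac:(lra)). pose proof (slope_nondecreasing r s0 c Hr ltac:(lra) ltac:(lra)).
    fold D0 in H1. nra.
Qed.

Lemma ln2_pos : 0 < ln 2.
Proof. pose proof ln_lt_2. lra. Qed.

Lemma rpow_of_pos x a : 0 < x -> rpow x a = exp (a * ln x).
Proof. intro. unfold rpow. destruct (Rlt_dec 0 x); [reflexivity | lra]. Qed.

Lemma rpow_0 a : rpow 0 a = 0.
Proof. unfold rpow. destruct (Rlt_dec 0 0); [lra | reflexivity]. Qed.

Definition llr (p : R) : R := ln ((1 - p) / p) / 2.

Lemma exp_2llr p : 0 < p < 1 -> exp (2 * llr p) = (1 - p) / p.
Proof.
  intro. unfold llr. replace (2 * (ln ((1 - p) / p) / 2)) with (ln ((1 - p) / p)) by field.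
  apply exp_ln, Rdiv_lt_0_compat; lra.
Qed.

Lemma Fbsc_fbs r p : -1 < r -> 0 < p < 1 -> Fbsc r p = fbs r (llr p).
Proof.
  intros Hr Hp. unfold Fbsc, fbs, Rpower.
  rewrite !rpow_of_pos, <- exp_plus by lra. f_equal.
  rewrite exp_2llr by auto.
  replace (1 + (1 - p) / p) with (/ p) by (field; lra). rewrite ln_Rinv by lra.
  replace (2 * alpha r * llr p) with (alpha r * (ln (1 - p) - ln p))
    by (unfold llr; rewrite ln_div by lra; field).
  replace (exp (/ (1 + r) * ln p) + exp (/ (1 + r) * ln (1 - p)))
    with (exp (alpha r * ln p) * (1 + exp (alpha r * (ln (1 - p) - ln p))))
    by (unfold alpha; rewrite Rmult_plus_distr_l, Rmult_1_r, <- exp_plus; f_equal; f_equal; ring).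
  rewrite ln_mult, ln_exp by (apply exp_pos || apply one_plus_exp_pos).
  unfold alpha. field. lra.
Qed.

Lemma hb_ent p : 0 < p < 1 -> hb p = ent (llr p) / ln 2.
Proof.
  intro Hp. unfold hb, plogp, ent, log2.
  destruct (Rlt_dec 0 p); [|lra]. destruct (Rlt_dec 0 (1 - p)); [|lra].
  rewrite exp_2llr by auto.
  replace (1 + (1 - p) / p) with (/ p) by (field; lra). rewrite ln_Rinv by lra.
  unfold llr. rewrite ln_div by lra.
  pose proof ln2_pos. field. split; lra.
Qed.

Lemma llr_nonneg p : 0 < p <= / 2 -> 0 <= llr p.
Proof.
  intro. unfold llr. apply Rmult_le_pos; [|lra]. rewrite <- ln_1.
  apply ln_le; [lra|]. apply (Rmult_le_reg_r p); [lra|]. field_simplify; lra.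
Qed.

Lemma llr_pos p : 0 < p < / 2 -> 0 < llr p.
Proof.
  intro. unfold llr. apply Rmult_lt_0_compat; [|lra]. rewrite <- ln_1.
  apply ln_increasing; [lra|]. apply (Rmult_lt_reg_r p); [lra|]. field_simplify; lra.
Qed.

Lemma llr_decreasing p q : 0 < p < q -> q < 1 -> llr q < llr p.
Proof.
  intros H Hq. unfold llr. apply Rmult_lt_compat_r; [lra|].
  apply ln_increasing; [apply Rdiv_lt_0_compat; lra|].
  apply (Rmult_lt_reg_r (p * q)); [nra|]. field_simplify; nra.
Qed.

Lemma llr_half : llr (/ 2) = 0.
Proof. unfold llr. replace ((1 - / 2) / / 2) with 1 by field. rewrite ln_1. field. Qed.

Lemma Fbsc_sym r p : Fbsc r (1 - p) = Fbsc r p.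
Proof. unfold Fbsc. replace (1 - (1 - p)) with p by ring. now rewrite Rplus_comm. Qed.

Lemma hb_sym p : hb (1 - p) = hb p.
Proof. unfold hb. replace (1 - (1 - p)) with p by ring. ring. Qed.

Lemma hb_0 : hb 0 = 0.
Proof.
  unfold hb, plogp. destruct (Rlt_dec 0 0); [lra|]. destruct (Rlt_dec 0 (1 - 0)); [|lra].
  rewrite Rminus_0_r. unfold log2. rewrite ln_1. pose proof ln2_pos. field. lra.
Qed.

Lemma hb_1 : hb 1 = 0.
Proof. replace 1 with (1 - 0) by ring. rewrite hb_sym. apply hb_0. Qed.

Lemma Fbsc_0 r : Fbsc r 0 = Rpower 2 (- r).
Proof.
  unfold Fbsc. rewrite rpow_0, Rminus_0_r, Rplus_0_l, rpow_of_pos by lra.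
  rewrite ln_1, Rmult_0_r, exp_0. unfold Rpower. rewrite ln_1, Rmult_0_r, exp_0. ring.
Qed.

Lemma Fbsc_1 r : Fbsc r 1 = Rpower 2 (- r).
Proof. replace 1 with (1 - 0) by ring. rewrite Fbsc_sym. apply Fbsc_0. Qed.

Lemma hb_half : hb (/ 2) = 1.
Proof.
  rewrite hb_ent, llr_half by lra. unfold ent.
  rewrite Rmult_0_r, exp_0. pose proof ln2_pos. replace (1 + 1) with 2 by ring. field. lra.
Qed.

Lemma Fbsc_half r : -1 < r -> Fbsc r (/ 2) = 1.
Proof.
  intro Hr. rewrite Fbsc_fbs, llr_half by (auto; lra). unfold fbs.
  rewrite !Rmult_0_r, exp_0. replace (1 + 1) with 2 by ring.
  replace (- r * ln 2 + (1 + r) * ln 2 - ln 2) with 0 by ring. apply exp_0.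
Qed.

Lemma hb_pos p : 0 < p < 1 -> 0 < hb p.
Proof.
  intro Hp. unfold hb, plogp, log2.
  destruct (Rlt_dec 0 p); [|lra]. destruct (Rlt_dec 0 (1 - p)); [|lra].
  assert (ln p < 0) by (rewrite <- ln_1; apply ln_increasing; lra).
  assert (ln (1 - p) < 0) by (rewrite <- ln_1; apply ln_increasing; lra).
  pose proof ln2_pos.
  assert (ln p / ln 2 < 0) by (apply Rdiv_neg_pos; lra).
  assert (ln (1 - p) / ln 2 < 0) by (apply Rdiv_neg_pos; lra). nra.
Qed.

Lemma hb_increasing p q : 0 <= p < q -> q <= / 2 -> hb p < hb q.
Proof.
  intros H Hq. destruct (Req_dec p 0) as [->|Hp0].
  - rewrite hb_0. apply hb_pos. lra.
  - rewrite !hb_ent by lra. apply Rmult_lt_compat_r; [apply Rinv_0_lt_compat, ln2_pos|].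
    apply ent_decreasing. split; [apply llr_nonneg; lra | apply llr_decreasing; lra].
Qed.

Lemma hb_le_1 p : 0 <= p <= 1 -> hb p <= 1.
Proof.
  intro H. rewrite <- hb_half. destruct (Rtotal_order p (/ 2)) as [L|[->|L]].
  - left. apply hb_increasing; lra.
  - lra.
  - rewrite <- hb_sym. left. apply hb_increasing; lra.
Qed.

Lemma hb_nonneg p : 0 <= p <= 1 -> 0 <= hb p.
Proof.
  intro H. destruct (Req_dec p 0) as [->|]; [rewrite hb_0; lra|].
  destruct (Req_dec p 1) as [->|]; [rewrite hb_1; lra|].
  left. apply hb_pos. lra.
Qed.

Lemma hb_inj_half p q : 0 <= p <= / 2 -> 0 <= q <= / 2 -> hb p = hb q -> p = q.
Proof.
  intros Hp Hq E. destruct (Rtotal_order p q) as [L|[L|L]]; auto.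
  - pose proof (hb_increasing p q ltac:(lra) ltac:(lra)). lra.
  - pose proof (hb_increasing q p ltac:(lra) ltac:(lra)). lra.
Qed.

Lemma Fbsc_hb_eq r p q : 0 <= p <= 1 -> 0 <= q <= 1 -> hb p = hb q -> Fbsc r p = Fbsc r q.
Proof.
  intros Hp Hq E.
  assert (Hred : forall t, 0 <= t <= 1 -> exists t', 0 <= t' <= / 2 /\
            hb t' = hb t /\ Fbsc r t' = Fbsc r t).
  { intros t Ht. destruct (Rle_or_lt t (/ 2)).
    - exists t. repeat split; lra.
    - exists (1 - t). rewrite hb_sym, Fbsc_sym. repeat split; lra. }
  destruct (Hred p Hp) as [p' [Hp' [Ep Fp]]]. destruct (Hred q Hq) as [q' [Hq' [Eq Fq]]].
  rewrite <- Fp, <- Fq. f_equal. apply hb_inj_half; congruence.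
Qed.

Lemma hb_eq_1 p : 0 <= p <= 1 -> hb p = 1 -> p = / 2.
Proof.
  intros H E. rewrite <- hb_half in E. destruct (Rle_or_lt p (/ 2)).
  - apply hb_inj_half; lra.
  - rewrite <- hb_sym in E. apply hb_inj_half in E; lra.
Qed.

Lemma hb_eq_0 p : 0 <= p <= 1 -> hb p = 0 -> p = 0 \/ p = 1.
Proof.
  intros H E. destruct (Req_dec p 0); auto. destruct (Req_dec p 1); auto.
  pose proof (hb_pos p ltac:(lra)). lra.
Qed.

Lemma continuity_of_deriv f x l : is_derive f x l -> continuity_pt f x.
Proof. intro H. apply derivable_continuous_pt. exists l. apply is_derive_Reals, H. Qed.

Lemma rpow_continuous_0 a : 0 < a -> continuity_pt (fun x => rpow x a) 0.
Proof.
  intros Ha e He. exists (exp (/ a * ln e)). split; [apply exp_pos|].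
  intros x [_ Hx]. simpl in *. unfold R_dist in *. rewrite rpow_0, Rminus_0_r in *.
  unfold rpow. destruct (Rlt_dec 0 x) as [Hp|Hp].
  - rewrite Rabs_right by (left; apply exp_pos). rewrite Rabs_right in Hx by lra.
    rewrite <- (exp_ln e He). apply exp_increasing.
    replace (ln e) with (a * ln (exp (/ a * ln e))) by (rewrite ln_exp; field; lra).
    apply Rmult_lt_compat_l, ln_increasing; auto.
  - rewrite Rabs_R0. exact He.
Qed.

Lemma rpow_continuous_pos a x : 0 < x -> continuity_pt (fun y => rpow y a) x.
Proof.
  intro Hx. apply (continuity_pt_ext_loc (fun y => exp (a * ln y))).
  - exists (mkposreal x Hx). intros y Hy. simpl in Hy. apply Rabs_def2 in Hy.
    rewrite rpow_of_pos; [reflexivity | unfold minus, plus, opp in Hy; simpl in Hy; lra].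
  - apply (continuity_of_deriv _ _ (a * (1 * / x) * exp (a * ln x))). auto_derive; auto.
Qed.

(** [- x ln x <= 2 sqrt x], from [1 + t <= e^t] at [t = - ln x / 2]. *)
Lemma neg_xlnx_le x : 0 < x -> - (x * ln x) <= 2 * sqrt x.
Proof.
  intro Hx. pose proof (sqrt_lt_R0 x Hx) as Hs.
  assert (Hexp : exp (- (/ 2 * ln x)) = / sqrt x)
    by (rewrite exp_Ropp, <- Rpower_sqrt by exact Hx; reflexivity).
  pose proof (exp_ineq1_le (- (/ 2 * ln x))) as Hineq. rewrite Hexp in Hineq.
  assert (Hsq : x = sqrt x * sqrt x) by (rewrite sqrt_sqrt; lra).
  set (q := sqrt x) in *. set (l := ln x) in *. rewrite Hsq.
  assert (0 < / q) by (apply Rinv_0_lt_compat; exact Hs).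
  assert (Hl : - l <= 2 * / q) by lra.
  apply Rmult_le_compat_l with (r := q * q) in Hl; [|nra].
  replace (q * q * (2 * / q)) with (2 * q) in Hl by (field; lra). lra.
Qed.

Lemma plogp_continuous_0 : continuity_pt plogp 0.
Proof.
  intros e He. pose proof ln2_pos as Hl2.
  set (k := e * ln 2 / 2). assert (Hk : 0 < k) by (unfold k; nra).
  exists (Rmin 1 (k * k)). split; [apply Rmin_glb_lt; nra|].
  intros x [_ Hx]. simpl in *. unfold R_dist, plogp in *.
  destruct (Rlt_dec 0 0); [lra|]. rewrite !Rminus_0_r in *.
  destruct (Rlt_dec 0 x) as [Hp|Hp]; [|rewrite Rabs_R0; lra].
  rewrite Rabs_right in Hx by lra.
  assert (Hx1 : x < 1) by (eapply Rlt_le_trans; [apply Hx | apply Rmin_l]).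
  assert (Hxk : x < k * k) by (eapply Rlt_le_trans; [apply Hx | apply Rmin_r]).
  assert (Hln : ln x < 0) by (rewrite <- ln_1; apply ln_increasing; lra).
  assert (Hsk : sqrt x < k).
  { rewrite <- (sqrt_square k) by lra. apply sqrt_lt_1; lra. }
  pose proof (neg_xlnx_le x Hp).
  unfold log2. rewrite Rabs_left.
  - replace (- (x * (ln x / ln 2))) with (- (x * ln x) / ln 2) by (field; lra).
    apply (Rmult_lt_reg_r (ln 2)); [lra|]. unfold k in Hsk.
    replace (- (x * ln x) / ln 2 * ln 2) with (- (x * ln x)) by (field; lra). lra.
  - assert (ln x / ln 2 < 0) by (apply Rdiv_neg_pos; lra). nra.
Qed.

Lemma plogp_continuous_pos x : 0 < x -> continuity_pt plogp x.
Proof.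
  intro Hx. apply (continuity_pt_ext_loc (fun y => y * (ln y / ln 2))).
  - exists (mkposreal x Hx). intros y Hy. simpl in Hy. apply Rabs_def2 in Hy.
    unfold plogp, log2. destruct (Rlt_dec 0 y) as [H|H]; [reflexivity|].
    unfold minus, plus, opp in Hy; simpl in Hy; lra.
  - pose proof ln2_pos. apply (continuity_of_deriv _ _ ((ln x + 1) / ln 2)). auto_derive.
    + repeat split; lra.
    + field. lra.
Qed.

Lemma one_minus_continuous x : continuity_pt (fun y => 1 - y) x.
Proof. apply (continuity_of_deriv _ _ (-1)). auto_derive; auto. Qed.

Lemma Fbsc_continuous_0 r : -1 < r -> continuity_pt (Fbsc r) 0.
Proof.
  intro Hr. unfold Fbsc. apply continuity_pt_mult; [apply continuity_pt_const; intros ??; reflexivity|].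
  apply (continuity_pt_comp (fun p => rpow p (/ (1 + r)) + rpow (1 - p) (/ (1 + r)))
           (fun y => Rpower y (1 + r))).
  - apply continuity_pt_plus.
    + apply rpow_continuous_0, Rinv_0_lt_compat. lra.
    + apply (continuity_pt_comp (fun y => 1 - y) (fun y => rpow y (/ (1 + r)))).
      * apply one_minus_continuous.
      * apply rpow_continuous_pos. lra.
  - rewrite rpow_0, Rminus_0_r, Rplus_0_l, rpow_of_pos, ln_1, Rmult_0_r, exp_0 by lra.
    unfold Rpower. apply (continuity_of_deriv _ _ ((1 + r) * (1 * / 1) * exp ((1 + r) * ln 1))).
    auto_derive; auto. lra.
Qed.

Lemma hb_continuous_0 : continuity_pt hb 0.
Proof.
  unfold hb. apply continuity_pt_minus.
  - apply (continuity_pt_opp plogp), plogp_continuous_0.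
  - apply (continuity_pt_comp (fun y => 1 - y) plogp).
    + apply one_minus_continuous.
    + apply plogp_continuous_pos. lra.
Qed.

(** Slope (with respect to [hb]) of the supporting line at [eps]. *)
Definition mu (r eps : R) : R := - slope r (llr eps) * ln 2.

Lemma supporting_line_interior r eps p : -1 < r -> 0 < eps < / 2 -> 0 < p <= / 2 ->
  Fbsc r p + mu r eps * hb p <= Fbsc r eps + mu r eps * hb eps.
Proof.
  intros Hr He Hp. unfold mu.
  rewrite !Fbsc_fbs, !hb_ent by (auto; lra). pose proof ln2_pos.
  replace (- slope r (llr eps) * ln 2 * (ent (llr p) / ln 2))
    with (- (slope r (llr eps) * ent (llr p))) by (field; lra).
  replace (- slope r (llr eps) * ln 2 * (ent (llr eps) / ln 2))
    with (- (slope r (llr eps) * ent (llr eps))) by (field; lra).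
  pose proof (supporting_line_s r (llr eps) (llr p) Hr (llr_pos eps He) (llr_nonneg p Hp)). lra.
Qed.

(** The
    endpoint [p = 0] follows by continuity, [p > 1/2] by symmetry. *)
Lemma bsc_supporting_line r eps p : -1 < r -> 0 < eps < / 2 -> 0 <= p <= 1 ->
  Fbsc r p + mu r eps * hb p <= Fbsc r eps + mu r eps * hb eps.
Proof.
  intros Hr He Hp. set (M := Fbsc r eps + mu r eps * hb eps).
  assert (Hlow : forall q, 0 <= q <= / 2 -> Fbsc r q + mu r eps * hb q <= M).
  { intros q Hq. destruct (Req_dec q 0) as [->|Hq0]; [|apply supporting_line_interior; auto; lra].
    apply Rnot_lt_le. intro Hc.
    assert (Hcont : continuity_pt (fun q => Fbsc r q + mu r eps * hb q) 0).
    { apply continuity_pt_plus; [apply Fbsc_continuous_0; auto|].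
      apply continuity_pt_scal, hb_continuous_0. }
    destruct (Hcont (Fbsc r 0 + mu r eps * hb 0 - M)) as [d [Hd Hnear]]; [lra|].
    set (q := Rmin (d / 2) eps).
    assert (Hq1 : 0 < q) by (apply Rmin_glb_lt; lra).
    assert (Hq2 : q <= eps) by apply Rmin_r.
    assert (Hq3 : q <= d / 2) by apply Rmin_l.
    specialize (Hnear q). simpl in Hnear. unfold R_dist in Hnear.
    assert (Hin : D_x no_cond 0 q /\ Rabs (q - 0) < d).
    { split; [split; [exact I | lra] | rewrite Rminus_0_r, Rabs_right; lra]. }
    specialize (Hnear Hin). apply Rabs_def2 in Hnear.
    pose proof (supporting_line_interior r eps q Hr He ltac:(lra)). fold M in H. lra. }
  destruct (Rle_or_lt p (/ 2)).
  - apply Hlow. lra.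
  - rewrite <- Fbsc_sym, <- hb_sym. apply Hlow. lra.
Qed.

(** The other side of concavity: F^bsc lies above the chord joining its
    values at [hb = 0] (which is [2^-r]) and [hb = 1] (which is [1]). *)
Lemma bsc_above_chord r p : -1 < r -> 0 <= p <= 1 ->
  1 + (Rpower 2 (- r) - 1) * (1 - hb p) <= Fbsc r p.
Proof.
  intros Hr Hp.
  assert (Hlow : forall q, 0 <= q <= / 2 -> 1 + (Rpower 2 (- r) - 1) * (1 - hb q) <= Fbsc r q).
  { intros q Hq.
    destruct (Req_dec q 0) as [->|Hq0]; [rewrite hb_0, Fbsc_0; lra|].
    destruct (Req_dec q (/ 2)) as [->|Hq1]; [rewrite hb_half, Fbsc_half; auto; lra|].
    pose proof (bsc_supporting_line r q 0 Hr ltac:(lra) ltac:(lra)) as At0.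
    pose proof (bsc_supporting_line r q (/ 2) Hr ltac:(lra) ltac:(lra)) as Athalf.
    rewrite hb_0, Fbsc_0 in At0. rewrite hb_half, Fbsc_half in Athalf by auto.
    pose proof (hb_nonneg q ltac:(lra)). pose proof (hb_le_1 q ltac:(lra)).
    set (h := hb q) in *. set (k := mu r q) in *. nra. }
  destruct (Rle_or_lt p (/ 2)).
  - apply Hlow. lra.
  - rewrite <- Fbsc_sym, <- hb_sym. apply Hlow. lra.
Qed.

Lemma sumR_plus m f g : sumR m (fun y => f y + g y) = sumR m f + sumR m g.
Proof. unfold sumR. induction (seq 0 m); simpl; [ring|]. rewrite IHl. ring. Qed.

Lemma sumR_scal m c f : sumR m (fun y => c * f y) = c * sumR m f.
Proof. unfold sumR. induction (seq 0 m); simpl; [ring|]. rewrite IHl. ring. Qed.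

Lemma sumR_minus m f g : sumR m (fun y => f y - g y) = sumR m f - sumR m g.
Proof. unfold sumR. induction (seq 0 m); simpl; [ring|]. rewrite IHl. ring. Qed.

Lemma sumR_le m f g : (forall y, (y < m)%nat -> f y <= g y) -> sumR m f <= sumR m g.
Proof.
  intro H. unfold sumR.
  assert (Hin : forall y, In y (seq 0 m) -> f y <= g y) by (intros y Hy; apply in_seq in Hy; apply H; lia).
  induction (seq 0 m) as [|y l IH]; simpl; [lra|].
  apply Rplus_le_compat; [apply Hin; now left | apply IH; intros; apply Hin; now right].
Qed.

Lemma sumR_ext m f g : (forall y, (y < m)%nat -> f y = g y) -> sumR m f = sumR m g.
Proof. intro H. apply Rle_antisym; apply sumR_le; intros y Hy; rewrite H; auto; lra. Qed.

Lemma sumR_nonneg_zero m f : (forall y, 0 <= f y) -> sumR m f = 0 ->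
  forall y, (y < m)%nat -> f y = 0.
Proof.
  intros Hnn Hsum y Hy. unfold sumR in Hsum.
  assert (Hin : In y (seq 0 m)) by (apply in_seq; lia). revert Hsum Hin.
  induction (seq 0 m) as [|z l IH]; simpl; [tauto|]. intros Hsum Hin.
  assert (0 <= fold_right Rplus 0 (map f l))
    by (clear - Hnn; induction l; simpl; [lra | pose proof (Hnn a); lra]).
  pose proof (Hnn z). destruct Hin as [<-|Hin]; [lra | apply IH; auto; lra].
Qed.

Lemma gallager_summand r w S : -1 < r -> 0 <= w -> 0 < S ->
  (if Rlt_dec 0 w then w * Rpower (/ 2 * S / rpow w (/ (1 + r))) r else 0)
  = rpow w (/ (1 + r)) * Rpower (/ 2 * S) r.
Proof.
  intros Hr Hw HS. destruct (Rlt_dec 0 w) as [Hp|Hp].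
  - rewrite rpow_of_pos by exact Hp. unfold Rpower.
    rewrite ln_div, ln_exp by (apply exp_pos || lra).
    rewrite <- (exp_ln w) at 1 by exact Hp. rewrite <- !exp_plus. f_equal. field. lra.
  - replace w with 0 by lra. rewrite rpow_0. ring.
Qed.

Lemma rpow_div u t a : 0 <= u -> 0 < t -> rpow (u / t) a = rpow u a * exp (- (a * ln t)).
Proof.
  intros Hu Ht. destruct (Req_dec u 0) as [->|Hu0].
  - unfold Rdiv. rewrite Rmult_0_l, rpow_0. ring.
  - rewrite !rpow_of_pos, ln_div, <- exp_plus by (try apply Rdiv_lt_0_compat; lra).
    f_equal. ring.
Qed.

(** Each output [y] contributes [q_y * Fbsc r p_y] to F, where
    [q_y = (W(y|0) + W(y|1))/2] and [p_y = W(y|0) / (W(y|0) + W(y|1))]. *)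
Lemma output_contribution_F r u v : -1 < r -> 0 <= u -> 0 <= v ->
  / 2 * (if Rlt_dec 0 u then u * Rpower (/ 2 * (rpow u (/ (1 + r)) + rpow v (/ (1 + r)))
                                         / rpow u (/ (1 + r))) r else 0)
  + / 2 * (if Rlt_dec 0 v then v * Rpower (/ 2 * (rpow u (/ (1 + r)) + rpow v (/ (1 + r)))
                                         / rpow v (/ (1 + r))) r else 0)
  = (u + v) / 2 * Fbsc r (u / (u + v)).
Proof.
  intros Hr Hu Hv.
  destruct (Req_dec (u + v) 0) as [Z|Z].
  { replace u with 0 by lra. replace v with 0 by lra.
    destruct (Rlt_dec 0 0); [lra|]. rewrite Rplus_0_r. unfold Rdiv. ring. }
  set (S := rpow u (/ (1 + r)) + rpow v (/ (1 + r))).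
  assert (HS : 0 < S).
  { unfold S, rpow. unfold Rpower.
    pose proof (exp_pos (/ (1 + r) * ln u)). pose proof (exp_pos (/ (1 + r) * ln v)).
    destruct (Rlt_dec 0 u), (Rlt_dec 0 v); lra. }
  rewrite !gallager_summand by auto. set (a := / (1 + r)) in *.
  transitivity (exp ((1 + r) * (ln S - ln 2))).
  - replace (/ 2 * (rpow u a * Rpower (/ 2 * S) r) + / 2 * (rpow v a * Rpower (/ 2 * S) r))
      with (/ 2 * S * Rpower (/ 2 * S) r) by (unfold S; ring).
    unfold Rpower. rewrite <- (exp_ln (/ 2 * S)) at 1 by lra.
    rewrite <- exp_plus, ln_mult, ln_Rinv by lra. f_equal. ring.
  - unfold Fbsc. replace (1 - u / (u + v)) with (v / (u + v)) by (field; lra).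
    rewrite !rpow_div by lra. fold a.
    replace (rpow u a * exp (- (a * ln (u + v))) + rpow v a * exp (- (a * ln (u + v))))
      with (S * exp (- (a * ln (u + v)))) by (unfold S; ring).
    unfold Rpower. rewrite ln_mult, ln_exp by (apply exp_pos || lra).
    replace ((u + v) / 2) with (exp (ln (u + v) - ln 2))
      by (unfold Rminus; rewrite exp_plus, exp_Ropp, !exp_ln by lra; reflexivity).
    rewrite <- !exp_plus. f_equal. unfold a. field. lra.
Qed.

(** The same decomposition for the mutual information:
    output [y] contributes [q_y * (1 - hb p_y)]. *)
Lemma capacity_summand w t : 0 <= w -> 0 < t ->
  (if Rlt_dec 0 w then w * log2 (w / (/ 2 * t)) else 0) = plogp w - w * log2 (/ 2 * t).
Proof.
  intros Hw Ht. unfold plogp. destruct (Rlt_dec 0 w) as [Hp|Hp].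
  - unfold log2. rewrite ln_div by lra. field. apply Rgt_not_eq, ln2_pos.
  - replace w with 0 by lra. ring.
Qed.

Lemma plogp_div w t : 0 <= w -> 0 < t -> plogp (w / t) = (plogp w - w * log2 t) / t.
Proof.
  intros Hw Ht. unfold plogp. destruct (Rlt_dec 0 w) as [Hp|Hp].
  - destruct (Rlt_dec 0 (w / t)) as [_|N]; [|exfalso; apply N, Rdiv_lt_0_compat; lra].
    unfold log2. rewrite ln_div by lra. field. split; [apply Rgt_not_eq, ln2_pos | lra].
  - replace w with 0 by lra. unfold Rdiv. rewrite Rmult_0_l.
    destruct (Rlt_dec 0 0); [lra|]. ring.
Qed.

Lemma output_contribution_C u v : 0 <= u -> 0 <= v ->
  / 2 * (if Rlt_dec 0 u then u * log2 (u / (/ 2 * (u + v))) else 0)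
  + / 2 * (if Rlt_dec 0 v then v * log2 (v / (/ 2 * (u + v))) else 0)
  = (u + v) / 2 * (1 - hb (u / (u + v))).
Proof.
  intros Hu Hv. destruct (Req_dec (u + v) 0) as [Z|Z].
  { replace u with 0 by lra. replace v with 0 by lra.
    destruct (Rlt_dec 0 0); [lra|]. rewrite Rplus_0_r. unfold Rdiv. ring. }
  rewrite !capacity_summand by lra. unfold hb.
  replace (1 - u / (u + v)) with (v / (u + v)) by (field; lra).
  rewrite !plogp_div by lra. unfold log2. rewrite ln_mult, ln_Rinv by lra.
  pose proof ln2_pos. field. lra.
Qed.

Lemma Fg_mixture m W r : -1 < r -> (forall x y, 0 <= W x y) ->
  Fg m W r = sumR m (fun y => (W false y + W true y) / 2
                              * Fbsc r (W false y / (W false y + W true y))).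
Proof.
  intros Hr Hnn. unfold Fg. unfold sumR at 1. simpl.
  rewrite Rplus_0_r, <- !sumR_scal, <- sumR_plus.
  apply sumR_ext. intros y _. apply output_contribution_F; auto.
Qed.

Lemma capacity_mixture m W : (forall x y, 0 <= W x y) ->
  capacity m W = sumR m (fun y => (W false y + W true y) / 2
                                  * (1 - hb (W false y / (W false y + W true y)))).
Proof.
  intros Hnn. unfold capacity. unfold sumR at 1. simpl.
  rewrite Rplus_0_r, <- !sumR_scal, <- sumR_plus.
  apply sumR_ext. intros y _. apply output_contribution_C; auto.
Qed.

(** Jensen-type bounds for a mixture of BSCs with weights [q] and
    crossovers [p]: F of the mixture is [sum q_y Fbsc p_y], its capacity
    [sum q_y (1 - hb p_y)]. *)
Section Mixture.
Variables (m : nat) (q p : nat -> R).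
Hypothesis q_nonneg : forall y, 0 <= q y.
Hypothesis q_sum : sumR m q = 1.
Hypothesis p_range : forall y, 0 <= p y <= 1.

Lemma mixture_lower r : -1 < r ->
  1 + (Rpower 2 (- r) - 1) * sumR m (fun y => q y * (1 - hb (p y)))
  <= sumR m (fun y => q y * Fbsc r (p y)).
Proof.
  intro Hr. rewrite <- q_sum at 1. rewrite <- sumR_scal, <- sumR_plus.
  apply sumR_le. intros y _.
  pose proof (bsc_above_chord r (p y) Hr (p_range y)). pose proof (q_nonneg y). nra.
Qed.

Lemma mixture_upper r eps : -1 < r -> 0 <= eps <= / 2 ->
  hb eps = sumR m (fun y => q y * hb (p y)) ->
  sumR m (fun y => q y * Fbsc r (p y)) <= Fbsc r eps.
Proof.
  intros Hr He Hh.
  assert (Hconst : forall c, (forall y, (y < m)%nat -> q y * Fbsc r (p y) = q y * c) ->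
            sumR m (fun y => q y * Fbsc r (p y)) = c).
  { intros c Hc. rewrite (sumR_ext _ _ _ Hc).
    transitivity (c * sumR m q); [|rewrite q_sum; ring].
    rewrite <- sumR_scal. apply sumR_ext. intros; ring. }
  destruct (Req_dec eps 0) as [->|He0]; [|destruct (Req_dec eps (/ 2)) as [->|He1]].
  - (* capacity 1: every used output is noiseless *)
    rewrite hb_0 in Hh. right. rewrite Fbsc_0. apply Hconst. intros y Hy.
    assert (Hnn : forall y, 0 <= q y * hb (p y))
      by (intro z; apply Rmult_le_pos; [apply q_nonneg | apply hb_nonneg, p_range]).
    assert (Hz := sumR_nonneg_zero m _ Hnn (eq_sym Hh) y Hy).
    destruct (Rmult_integral _ _ Hz) as [->|Hhb]; [ring|].
    destruct (hb_eq_0 _ (p_range y) Hhb) as [->| ->]; [rewrite Fbsc_0 | rewrite Fbsc_1]; ring.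
  - (* capacity 0: every used output is useless *)
    rewrite hb_half in Hh. right. rewrite Fbsc_half by exact Hr. apply Hconst. intros y Hy.
    assert (Hzero : sumR m (fun y => q y * (1 - hb (p y))) = 0).
    { transitivity (sumR m q - sumR m (fun y => q y * hb (p y))); [|rewrite q_sum, <- Hh; ring].
      rewrite <- sumR_minus. apply sumR_ext. intros; ring. }
    assert (Hnn : forall y, 0 <= q y * (1 - hb (p y))).
    { intro z. pose proof (hb_le_1 _ (p_range z)). pose proof (q_nonneg z). nra. }
    assert (Hz := sumR_nonneg_zero m _ Hnn Hzero y Hy).
    destruct (Rmult_integral _ _ Hz) as [->|Hhb]; [ring|].
    rewrite (hb_eq_1 _ (p_range y) ltac:(lra)), Fbsc_half by exact Hr. ring.
  - (* interior: average the supporting line at eps *)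
    assert (He' : 0 < eps < / 2) by lra.
    apply Rle_trans with (sumR m (fun y => q y * (Fbsc r eps + mu r eps * hb eps)
                                           + - mu r eps * (q y * hb (p y)))).
    + apply sumR_le. intros y _.
      pose proof (bsc_supporting_line r eps (p y) Hr He' (p_range y)). pose proof (q_nonneg y). nra.
    + rewrite sumR_plus, sumR_scal, <- Hh.
      replace (sumR m (fun y => q y * (Fbsc r eps + mu r eps * hb eps)))
        with ((Fbsc r eps + mu r eps * hb eps) * sumR m q)
        by (rewrite <- sumR_scal; apply sumR_ext; intros; ring).
      rewrite q_sum. lra.
Qed.
End Mixture.

(** The crossover of an output is a probability (it is [0] if [q_y = 0]). *)
Lemma crossover_range u v : 0 <= u -> 0 <= v -> 0 <= u / (u + v) <= 1.
Proof.
  intros Hu Hv. destruct (Req_dec (u + v) 0) as [Z|Z].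
  - replace u with 0 by lra. unfold Rdiv. rewrite Rmult_0_l. lra.
  - split; [apply Rdiv_le_0_compat; lra|].
    apply (Rmult_le_reg_r (u + v)); [lra|]. field_simplify; lra.
Qed.

Lemma F_bounds m W r eps : is_channel m W -> -1 < r ->
  0 <= eps <= / 2 -> hb eps = 1 - capacity m W ->
  Fbec r (capacity m W) <= Fg m W r /\ Fg m W r <= Fbsc r eps.
Proof.
  intros [Hnn Hsum] Hr He Hh.
  set (q := fun y => (W false y + W true y) / 2).
  set (p := fun y => W false y / (W false y + W true y)).
  assert (Hq : forall y, 0 <= q y) by (intro y; pose proof (Hnn false y); pose proof (Hnn true y); unfold q; lra).
  assert (Hq1 : sumR m q = 1).
  { transitivity (/ 2 * (sumR m (W false) + sumR m (W true))); [|rewrite !Hsum; field].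
    rewrite <- sumR_plus, <- sumR_scal. apply sumR_ext. intros; unfold q; field. }
  assert (Hp : forall y, 0 <= p y <= 1) by (intro y; apply crossover_range; auto).
  rewrite (capacity_mixture m W Hnn) in *. rewrite (Fg_mixture m W r Hr Hnn). fold q p.
  split.
  - apply (mixture_lower m q p Hq Hq1 Hp r Hr).
  - apply (mixture_upper m q p Hq Hq1 Hp r eps Hr He).
    rewrite Hh. transitivity (sumR m q - sumR m (fun y => q y * (1 - hb (p y))));
      [rewrite Hq1; reflexivity|].
    rewrite <- sumR_minus. apply sumR_ext. intros; ring.
Qed.

Lemma neg_log2_antitone x y : 0 < x -> x <= y -> - log2 y <= - log2 x.
Proof.
  intros Hx Hxy. unfold log2. pose proof ln2_pos. apply Ropp_le_contravar.
  apply Rmult_le_compat_r; [left; apply Rinv_0_lt_compat; lra | apply ln_le; auto].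
Qed.

Lemma E0_bounds m W r eps : is_channel m W -> -1 < r ->
  0 <= eps <= / 2 -> hb eps = 1 - capacity m W ->
  - log2 (Fbsc r eps) <= E0 m W r /\ E0 m W r <= - log2 (Fbec r (capacity m W)).
Proof.
  intros HW Hr He Hh. destruct (F_bounds m W r eps HW Hr He Hh) as [Hlo Hup].
  pose proof (hb_nonneg eps ltac:(lra)). pose proof (hb_le_1 eps ltac:(lra)).
  assert (Hpos : 0 < Fbec r (capacity m W)).
  { unfold Fbec. pose proof (exp_pos (- r * ln 2)). unfold Rpower. nra. }
  unfold E0. split; apply neg_log2_antitone; lra.
Qed.

Lemma Rpower_2_m1 : Rpower 2 (Ropp 1) = / 2.
Proof. unfold Rpower. replace (Ropp 1 * ln 2) with (- ln 2) by ring. rewrite exp_Ropp, exp_ln; lra. Qed.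

Lemma Fbsc_rho1 eps : 0 <= eps <= 1 -> Fbsc 1 eps = / 2 * (sqrt eps + sqrt (1 - eps)) ^ 2.
Proof.
  intro H.
  assert (Hsqrt : forall x, 0 <= x -> rpow x (/ (1 + 1)) = sqrt x).
  { intros x [Hx| <-]; [|rewrite rpow_0, sqrt_0; reflexivity].
    replace (/ (1 + 1)) with (/ 2) by field. unfold rpow.
    destruct (Rlt_dec 0 x); [apply Rpower_sqrt; exact Hx | lra]. }
  unfold Fbsc. rewrite Rpower_2_m1, !Hsqrt by lra.
  replace (1 + 1) with (INR 2) by (simpl; ring). rewrite Rpower_pow; [reflexivity|].
  destruct (Req_dec eps 1) as [->|N].
  - rewrite sqrt_1. pose proof (sqrt_pos (1 - 1)). lra.
  - pose proof (sqrt_pos eps). assert (0 < sqrt (1 - eps)) by (apply sqrt_lt_R0; lra). lra.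
Qed.

Lemma Fbec_rho1 C : Fbec 1 C = (1 + (1 - C)) / 2.
Proof. unfold Fbec. rewrite Rpower_2_m1. field. Qed.

Lemma bsc_nonneg p : 0 <= p <= 1 -> forall x y, 0 <= bsc p x y.
Proof. intros Hp [|] [|[|y]]; simpl; lra. Qed.

Lemma bec_nonneg e : 0 <= e <= 1 -> forall x y, 0 <= bec e x y.
Proof. intros He [|] [|[|[|y]]]; simpl; lra. Qed.

Lemma Fg_bsc r p : -1 < r -> 0 <= p <= 1 -> Fg 2 (bsc p) r = Fbsc r p.
Proof.
  intros Hr Hp. rewrite (Fg_mixture 2 (bsc p) r Hr (bsc_nonneg p Hp)). unfold sumR. simpl.
  replace (1 - p + p) with 1 by ring. replace (p + (1 - p)) with 1 by ring.
  rewrite !Rdiv_1_r, Fbsc_sym. field.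
Qed.

Lemma capacity_bsc p : 0 <= p <= 1 -> capacity 2 (bsc p) = 1 - hb p.
Proof.
  intro Hp. rewrite (capacity_mixture 2 (bsc p) (bsc_nonneg p Hp)). unfold sumR. simpl.
  replace (1 - p + p) with 1 by ring. replace (p + (1 - p)) with 1 by ring.
  rewrite !Rdiv_1_r, hb_sym. field.
Qed.

(** Weight-times-value of an output whose two likelihoods are [(u, 0)] or
    [(u, u)]; the crossover is then [1] or [1/2] unless the weight is 0. *)
Lemma output_u0 (g : R -> R) u : (u + 0) / 2 * g (u / (u + 0)) = u / 2 * g 1.
Proof.
  rewrite Rplus_0_r. destruct (Req_dec u 0) as [->|N]; [unfold Rdiv; ring|].
  replace (u / u) with 1 by (field; lra). reflexivity.
Qed.

Lemma output_uu (g : R -> R) u : (u + u) / 2 * g (u / (u + u)) = u * g (/ 2).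
Proof.
  destruct (Req_dec u 0) as [->|N]; [unfold Rdiv; ring|].
  replace (u / (u + u)) with (/ 2) by (field; lra). field.
Qed.

Lemma Fg_bec r e : -1 < r -> 0 <= e <= 1 -> Fg 3 (bec e) r = Fbec r (capacity 3 (bec e)).
Proof.
  intros Hr He.
  rewrite (Fg_mixture 3 (bec e) r Hr (bec_nonneg e He)),
          (capacity_mixture 3 (bec e) (bec_nonneg e He)).
  unfold sumR, Fbec. simpl.
  rewrite !(output_u0 (Fbsc r)), !(output_u0 (fun t => 1 - hb t)),
          !(output_uu (Fbsc r)), !(output_uu (fun t => 1 - hb t)).
  rewrite Rplus_0_l, Rdiv_0_l, Fbsc_0, Fbsc_1, Fbsc_half, hb_0, hb_1, hb_half by exact Hr. field.
Qed.

Theorem mainTheorem6 :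
  (* general bounds on E0 *)
  (forall (m : nat) (W : bool -> nat -> R) (rho eps : R),
     is_BIMS m W -> -1 < rho ->
     0 <= eps <= / 2 -> hb eps = 1 - capacity m W ->
     - log2 (Fbsc rho eps) <= E0 m W rho /\
     E0 m W rho <= - log2 (Fbec rho (capacity m W))) /\
  (* cutoff rate bounds *)
  (forall (m : nat) (W : bool -> nat -> R) (eps : R),
     is_BIMS m W ->
     0 <= eps <= / 2 -> hb eps = 1 - capacity m W ->
     - log2 (/ 2 * (sqrt eps + sqrt (1 - eps)) ^ 2) <= E0 m W 1 /\
     E0 m W 1 <= - log2 ((1 + (1 - capacity m W)) / 2)) /\
  (* equality on the left for the BSC *)
  (forall (p eps : R),
     0 <= p <= 1 ->
     0 <= eps <= / 2 -> hb eps = 1 - capacity 2 (bsc p) ->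
     E0 2 (bsc p) 1 = - log2 (/ 2 * (sqrt eps + sqrt (1 - eps)) ^ 2)) /\
  (* equality on the right for the BEC *)
  (forall e : R,
     0 <= e <= 1 ->
     E0 3 (bec e) 1 = - log2 ((1 + (1 - capacity 3 (bec e))) / 2)).
Proof.
  split; [|split; [|split]].
  - intros m W rho eps [HW _]. apply E0_bounds, HW.
  - intros m W eps [HW _] He Hh.
    rewrite <- Fbsc_rho1, <- Fbec_rho1 by lra. apply E0_bounds; auto; lra.
  - intros p eps Hp He Hh. rewrite capacity_bsc in Hh by exact Hp.
    unfold E0. rewrite Fg_bsc, <- Fbsc_rho1 by lra.
    do 2 f_equal. apply Fbsc_hb_eq; lra.
  - intros e He. unfold E0. rewrite Fg_bec, Fbec_rho1 by lra. reflexivity.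
Qed.
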